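(* Let $G_1,\dots,G_n$ be non-trivial, pairwise non-isomorphic, centreless, directly indecomposable groups, let $r_1,\dots,r_n$ be positive integers and $G=G_1^{r_1}\times\cdots\times G_n^{r_n}$. Then $$\operatorname{Spec}_R(G)=\prod_{i=1}^n\left(\bigcup_{j=1}^{r_i}\operatorname{Spec}_R(G_i)^{(j)}\right).$$ In particular, $G$ has the $R_\infty$-property if and only if $G_i$ has the $R_\infty$-property for some $i$.
   Context: A group $A$ is directly indecomposable if $A\cong B\times C$ implies $B=1$ or $C=1$. $R(\psi)$ is the Reidemeister number of an endomorphism $\psi$ of $A$ (number of classes of $x\sim gx\psi(g)^{-1}$), $\operatorname{Spec}_R(A)=\{R(\psi)\mid\psi\in\operatorname{Aut}(A)\}$, and $A$ has the $R_\infty$-property if $\operatorname{Spec}_R(A)=\{\infty\}$. For $S_1,\dots,S_m\subseteq\mathbb{N}\cup\{\infty\}$, $\prod_i S_i=\{s_1\cdots s_m\mid s_i\in S_i\}$, $S^{(j)}$ is the $j$-fold product of $S$ with itself, with convention $a\cdot\infty=\infty$. *)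

From HB Require Import structures.
From mathcomp Require Import all_boot.

Set Implicit Arguments.
Unset Strict Implicit.
Unset Printing Implicit Defensive.

Definition is_hom (A B : groupType) (f : A -> B) : Prop :=
  forall x y : A, f (mul x y) = mul (f x) (f y).

Definition is_iso (A B : groupType) (f : A -> B) : Prop :=
  is_hom f /\ bijective f.

Definition isomorphic (A B : groupType) : Prop :=
  exists f : A -> B, is_iso f.

Definition is_aut (A : groupType) (f : A -> A) : Prop := is_iso f.

Definition trivial_group (A : groupType) : Prop := forall x : A, x = one.

Definition centreless (A : groupType) : Prop :=
  forall z : A, (forall x : A, mul z x = mul x z) -> z = one.

Definition gprod (B C : groupType) : Type := (B * C)%type.
HB.instance Definition _ (B C : groupType) := Choice.on (gprod B C).

Section GProd.
Variables B C : groupType.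
Definition gprod_one : gprod B C := (one, one).
Definition gprod_inv (x : gprod B C) : gprod B C := (inv x.1, inv x.2).
Definition gprod_mul (x y : gprod B C) : gprod B C :=
  (mul x.1 y.1, mul x.2 y.2).
Fact gprod_mulA : associative gprod_mul.
Proof. by move=> [? ?] [? ?] [? ?]; rewrite /gprod_mul /= !mulgA. Qed.
Fact gprod_mul1 : left_id gprod_one gprod_mul.
Proof. by move=> [? ?]; rewrite /gprod_mul /= !mul1g. Qed.
Fact gprod_mulg1 : right_id gprod_one gprod_mul.
Proof. by move=> [? ?]; rewrite /gprod_mul /= !mulg1. Qed.
Fact gprod_mulV : left_inverse gprod_one gprod_inv gprod_mul.
Proof. by move=> [? ?]; rewrite /gprod_mul /= !mulVg. Qed.
Fact gprod_mulgV : right_inverse gprod_one gprod_inv gprod_mul.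
Proof. by move=> [? ?]; rewrite /gprod_mul /= !mulgV. Qed.
End GProd.

HB.instance Definition _ (B C : groupType) :=
  isGroup.Build (gprod B C) (@gprod_mulA B C) (@gprod_mul1 B C)
    (@gprod_mulg1 B C) (@gprod_mulV B C) (@gprod_mulgV B C).

Definition directly_indecomposable (A : groupType) : Prop :=
  forall B C : groupType, isomorphic A (gprod B C) ->
    trivial_group B \/ trivial_group C.

Definition dprodG (I : finType) (F : I -> groupType) : Type :=
  {dffun forall i : I, F i}.
HB.instance Definition _ (I : finType) (F : I -> groupType) :=
  Choice.on (dprodG F).

Section DProd.
Variables (I : finType) (F : I -> groupType).
Definition dprod_one : dprodG F := [ffun i => one].
Definition dprod_inv (x : dprodG F) : dprodG F := [ffun i => inv (x i)].
Definition dprod_mul (x y : dprodG F) : dprodG F := [ffun i => mul (x i) (y i)].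
Fact dprod_mulA : associative dprod_mul.
Proof. by move=> x y z; apply/ffunP => i; rewrite !ffunE mulgA. Qed.
Fact dprod_mul1 : left_id dprod_one dprod_mul.
Proof. by move=> x; apply/ffunP => i; rewrite !ffunE mul1g. Qed.
Fact dprod_mulg1 : right_id dprod_one dprod_mul.
Proof. by move=> x; apply/ffunP => i; rewrite !ffunE mulg1. Qed.
Fact dprod_mulV : left_inverse dprod_one dprod_inv dprod_mul.
Proof. by move=> x; apply/ffunP => i; rewrite !ffunE mulVg. Qed.
Fact dprod_mulgV : right_inverse dprod_one dprod_inv dprod_mul.
Proof. by move=> x; apply/ffunP => i; rewrite !ffunE mulgV. Qed.
End DProd.

HB.instance Definition _ (I : finType) (F : I -> groupType) :=
  isGroup.Build (dprodG F) (@dprod_mulA I F) (@dprod_mul1 I F)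
    (@dprod_mulg1 I F) (@dprod_mulV I F) (@dprod_mulgV I F).

(* G_1^{r_1} x ... x G_n^{r_n}: the direct product of the family
   indexed by pairs (i, j), i < n, j < r_i, whose (i,j)-factor is G_i *)
Definition powprodG (n : nat) (G : 'I_n -> groupType) (r : 'I_n -> nat)
  : groupType :=
  dprodG (fun k : {i : 'I_n & 'I_(r i)} => G (tag k)).

Inductive enat := Fin of nat | Inf.

(* multiplication with the convention a * oo = oo * a = oo *)
Definition enat_mul (a b : enat) : enat :=
  match a, b with
  | Fin x, Fin y => Fin (x * y)
  | _, _ => Inf
  end.

Definition twisted_conj (A : groupType) (psi : A -> A) (x y : A) : Prop :=
  exists g : A, y = mul (mul g x) (inv (psi g)).

Definition has_n_classes (T : Type) (R : T -> T -> Prop) (n : nat) : Prop :=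
  exists c : T -> 'I_n,
    (forall k : 'I_n, exists x, c x = k) /\ (forall x y, c x = c y <-> R x y).

Definition reidemeister_number_is (A : groupType) (psi : A -> A) (k : enat)
  : Prop :=
  match k with
  | Fin n => has_n_classes (twisted_conj psi) n
  | Inf => forall n, ~ has_n_classes (twisted_conj psi) n
  end.

Definition enat_set := enat -> Prop.

Definition SpecR (A : groupType) : enat_set :=
  fun k => exists psi : A -> A, is_aut psi /\ reidemeister_number_is psi k.

Definition R_infinity (A : groupType) : Prop :=
  forall k, SpecR A k <-> k = Inf.

Definition set_prod (S T : enat_set) : enat_set :=
  fun k => exists a b, S a /\ T b /\ k = enat_mul a b.

Definition set_one : enat_set := fun k => k = Fin 1.

Fixpoint set_pow (S : enat_set) (j : nat) : enat_set :=
  match j with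
  | 0 => set_one
  | j'.+1 => set_prod S (set_pow S j')
  end.

Definition big_set_prod (I : Type) (s : seq I) (F : I -> enat_set) : enat_set :=
  foldr (fun i acc => set_prod (F i) acc) set_one s.

From HB Require Import structures.
From mathcomp Require Import all_boot boolp.

(* 1. Reidemeister numbers are invariant under conjugation by isomorphisms
      and multiplicative on componentwise maps of direct products.
   2. Monomial maps of a power H^K, x |-> (phi_l (x_(tau l)))_l: eliminating
      a coordinate moved by tau preserves the Reidemeister number
      (contraction), so the Reidemeister numbers of monomial automorphisms
      of H^K are exactly the elements of Spec_R(H)^(j), 1 <= j <= |K|.
   3. An indecomposable group that is the internal direct product of two
      subgroups has one of them trivial.  Applied coordinatewise, this shows
      that every automorphism of a product of non-trivial, centreless,
      indecomposable groups is monomial: it maps each factor isomorphically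
      onto some factor.
   4. Non-isomorphic factors of G cannot be exchanged, so after regrouping G
      as the product of the blocks G_i^(r_i) every automorphism is a product
      of monomial automorphisms of the blocks, and conversely; 1 and 2 then
      give Spec_R(G).  The R_infinity statement follows because Spec_R is
      never empty. *)

Set Implicit Arguments.
Unset Strict Implicit.
Unset Printing Implicit Defensive.

Section Homomorphisms.
Local Open Scope group_scope.

Lemma hom1 (A B : groupType) (f : A -> B) : is_hom f -> f 1 = 1.
Proof. by move=> hf; apply: (mulgI (f 1)); rewrite -hf !mulg1. Qed.

Lemma homV (A B : groupType) (f : A -> B) x : is_hom f -> f x^-1 = (f x)^-1.
Proof. by move=> hf; apply: (mulgI (f x)); rewrite -hf !mulgV (hom1 hf). Qed.

Lemma hom_comp (A B C : groupType) (f : A -> B) (g : B -> C) :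
  is_hom f -> is_hom g -> is_hom (g \o f).
Proof. by move=> hf hg x y /=; rewrite hf hg. Qed.

Lemma iso_comp (A B C : groupType) (f : A -> B) (g : B -> C) :
  is_iso f -> is_iso g -> is_iso (g \o f).
Proof. by move=> [hf bf] [hg bg]; split; [exact: hom_comp | exact: bij_comp]. Qed.

Lemma iso_id (A : groupType) : is_iso (@id A).
Proof. by split => //; exists id. Qed.

Lemma iso_inv (A B : groupType) (f : A -> B) (g : B -> A) :
  is_iso f -> cancel f g -> cancel g f -> is_iso g.
Proof.
move=> [hf _] fK gK; split; last by exists f.
by move=> x y; apply: (can_inj fK); rewrite hf !gK.
Qed.

End Homomorphisms.

Lemma has_n_classes_transfer (T1 T2 : Type) (R1 : T1 -> T1 -> Prop)
    (R2 : T2 -> T2 -> Prop) (f : T1 -> T2) :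
  (forall y, exists x, f x = y) -> (forall x y, R1 x y <-> R2 (f x) (f y)) ->
  forall n, has_n_classes R1 n <-> has_n_classes R2 n.
Proof.
move=> f_surj fR n; pose g y := sval (cid (f_surj y)).
have gK y : f (g y) = y by rewrite /g; case: cid.
split=> -[c [c_surj cR]].
- exists (c \o g); split=> [k | x y /=].
    have [x <-] := c_surj k; exists (f x).
    by apply/cR/fR; rewrite gK; apply/fR/cR.
  by rewrite cR fR !gK.
- exists (c \o f); split=> [k | x y /=]; last by rewrite cR fR.
  by have [y <-] := c_surj k; exists (g y); rewrite /= gK.
Qed.

Lemma has_n_classes_of_code (T : Type) (R : T -> T -> Prop) (F : finType)
    (d : T -> F) :
  (forall y, exists x, d x = y) -> (forall x y, d x = d y <-> R x y) ->
  has_n_classes R #|F|.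
Proof.
move=> d_surj dR; exists (fun x => enum_rank (d x)); split=> [k | x y].
  by have [x dx] := d_surj (enum_val k); exists x; rewrite dx enum_valK.
by rewrite -dR; split=> [/enum_rank_inj | ->].
Qed.

(* A code into a finite type, not necessarily onto, still shows that there
   are finitely many classes: restrict it to its image. *)
Lemma finite_classes_of_code (T : Type) (R : T -> T -> Prop) (F : finType)
    (d : T -> F) :
  (forall x y, d x = d y <-> R x y) -> exists m, has_n_classes R m.
Proof.
move=> dR; pose im : pred F := fun y => `[< exists x, d x = y >].
have im_d x : im (d x) by apply/asboolP; exists x.
pose d' x : {y : F | im y} := exist _ (d x) (im_d x).
exists #|{: {y : F | im y}}|; apply: (@has_n_classes_of_code _ _ _ d').
  case=> y im_y; have /asboolP [x dx] := im_y; exists x; exact: val_inj.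
move=> x y; rewrite -dR; split=> [e | e]; [exact: (congr1 val e) | exact: val_inj].
Qed.

Lemma has_n_classes_unique (T : Type) (R : T -> T -> Prop) n m :
  has_n_classes R n -> has_n_classes R m -> n = m.
Proof.
suff le_nm n' m' : has_n_classes R n' -> has_n_classes R m' -> n' <= m'.
  by move=> hn hm; apply/eqP; rewrite eqn_leq !le_nm.
move=> [c [c_surj cR]] [c' [_ c'R]].
pose pre k := sval (cid (c_surj k)).
have preK k : c (pre k) = k by rewrite /pre; case: cid.
have inj : injective (fun k => c' (pre k)).
  by move=> a b /c'R /cR; rewrite !preK.
by have := leq_card _ inj; rewrite !card_ord.
Qed.

Lemma reidemeister_unique (A : groupType) (psi : A -> A) a b :
  reidemeister_number_is psi a -> reidemeister_number_is psi b -> a = b.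
Proof.
case: a => [n|]; case: b => [m|] //= ha hb; last by case: (ha m).
  by rewrite (has_n_classes_unique ha hb).
by case: (hb n).
Qed.

Lemma reidemeister_exists (A : groupType) (psi : A -> A) :
  exists k, reidemeister_number_is psi k.
Proof.
have [[n hn] | no_n] := pselect (exists n, has_n_classes (twisted_conj psi) n).
  by exists (Fin n).
by exists Inf => n hn; apply: no_n; exists n.
Qed.

Lemma reidemeister_transfer (A B : groupType) (psi : A -> A) (chi : B -> B)
    (f : A -> B) :
  (forall y, exists x, f x = y) ->
  (forall x y, twisted_conj psi x y <-> twisted_conj chi (f x) (f y)) ->
  forall k, reidemeister_number_is psi k <-> reidemeister_number_is chi k.
Proof.
move=> f_surj fR [n|] /=; first exact: has_n_classes_transfer.
by split=> h m hm; apply: (h m); apply/(has_n_classes_transfer f_surj fR).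
Qed.

Section TwistedConjugacy.
Local Open Scope group_scope.

Lemma twisted_conj_refl (A : groupType) (psi : A -> A) x :
  is_hom psi -> twisted_conj psi x x.
Proof. by move=> hpsi; exists 1; rewrite (hom1 hpsi) invg1 mulg1 mul1g. Qed.

Lemma reidemeister_conj (A B : groupType) (psi : A -> A) (chi : B -> B)
    (theta : A -> B) :
  is_iso theta -> (forall x, theta (psi x) = chi (theta x)) ->
  forall k, reidemeister_number_is psi k <-> reidemeister_number_is chi k.
Proof.
move=> [htheta [theta' thetaK theta'K]] intertwine.
apply: (reidemeister_transfer (f := theta)) => [y | x y].
  by exists (theta' y).
split=> [[g ->] | [h e]].
  by exists (theta g); rewrite !htheta (homV _ htheta) intertwine.
exists (theta' h); apply: (can_inj thetaK).
by rewrite !htheta (homV _ htheta) intertwine theta'K -e.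
Qed.

End TwistedConjugacy.

(* The R_infinity property: Spec_R is never empty (it contains R(id)), so
   R_infinity means that every element of Spec_R is infinite. *)
Lemma R_infinityP (A : groupType) :
  R_infinity A <-> forall k, SpecR A k -> k = Inf.
Proof.
split=> [inf k /inf // | inf k]; split=> [/inf // | ->].
have [k0 rn_k0] := reidemeister_exists (@id A).
have spec_k0 : SpecR A k0 by exists id; split=> //; exact: iso_id.
by rewrite -(inf _ spec_k0).
Qed.

Section DirectProduct.
Local Open Scope group_scope.
Variables (I : finType) (A : I -> groupType).
Implicit Types x y : dprodG A.

Lemma dprod_mulE x y i : (x * y) i = x i * y i.
Proof. by rewrite /= ffunE. Qed.

Lemma dprod_invE x i : x^-1 i = (x i)^-1.
Proof. by rewrite /= ffunE. Qed.

Lemma dprod_oneE i : (1 : dprodG A) i = 1.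
Proof. by rewrite /= ffunE. Qed.

Definition incl (k : I) (a : A k) : dprodG A :=
  [ffun l => if @eqP _ k l is ReflectT e then eq_rect k A a l e else 1].

Lemma incl_at k (a : A k) : incl a k = a.
Proof. by rewrite ffunE; case: eqP => // e; rewrite (eq_axiomK e). Qed.

Lemma incl_off k (a : A k) l : k != l -> incl a l = 1.
Proof. by move=> kl; rewrite ffunE; case: eqP => // e; rewrite e eqxx in kl. Qed.

Lemma incl_hom k : is_hom (@incl k).
Proof.
move=> a b; apply/ffunP => l; rewrite dprod_mulE.
have [<- | kl] := eqVneq k l; first by rewrite !incl_at.
by rewrite !incl_off // mulg1.
Qed.

Lemma incl_inj k : injective (@incl k).
Proof. by move=> a b /(congr1 (fun x => x k)); rewrite !incl_at. Qed.

Variable psi : forall i, A i -> A i.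
Arguments psi : clear implicits.

Definition prodmap x : dprodG A := [ffun i => psi i (x i)].

Lemma prodmap_iso : (forall i, is_iso (psi i)) -> is_iso prodmap.
Proof.
move=> iso_psi; split.
  move=> x y; apply/ffunP => i; rewrite /prodmap dprod_mulE !ffunE.
  by case: (iso_psi i) => ->.
have inv_psi i : {g | cancel (psi i) g /\ cancel g (psi i)}.
  by apply: cid; have [_ [g g1 g2]] := iso_psi i; exists g.
exists (fun y => [ffun i => sval (inv_psi i) (y i)] : dprodG A) => x;
  by apply/ffunP => i; rewrite !ffunE; case: (inv_psi i) => g [g1 g2].
Qed.

Lemma twisted_conj_prodmap x y :
  twisted_conj prodmap x y <-> forall i, twisted_conj (psi i) (x i) (y i).
Proof.
split=> [[g ->] i | tw].
  by exists (g i); rewrite /prodmap !dprod_mulE dprod_invE ffunE.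
pose g : dprodG A := [ffun i => sval (cid (tw i))].
exists g; apply/ffunP => i; rewrite /prodmap !dprod_mulE dprod_invE !ffunE.
by case: cid.
Qed.

Hypothesis hom_psi : forall i, is_hom (psi i).

Lemma twisted_conj_incl k (a b : A k) :
  twisted_conj prodmap (incl a) (incl b) <-> twisted_conj (psi k) a b.
Proof.
rewrite twisted_conj_prodmap; split=> [/(_ k) | tw l]; first by rewrite !incl_at.
have [<- | kl] := eqVneq k l; first by rewrite !incl_at.
by rewrite !incl_off //; apply: twisted_conj_refl.
Qed.

(* If one factor has infinitely many twisted classes, so does the product:
   a finite classification of the product would restrict to that factor. *)
Lemma reidemeister_prodmap_Inf k :
  reidemeister_number_is (psi k) Inf -> reidemeister_number_is prodmap Inf.
Proof.
move=> inf_k m [c [_ cR]].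
have [m' hm'] : exists m', has_n_classes (twisted_conj (psi k)) m'.
  apply: (@finite_classes_of_code _ _ _ (c \o @incl k)) => a b /=.
  by rewrite cR twisted_conj_incl.
exact: inf_k hm'.
Qed.

(* If every factor has finitely many classes, the classes of the product
   are the tuples of classes of the factors. *)
Lemma reidemeister_prodmap_Fin (n : I -> nat) :
  (forall i, has_n_classes (twisted_conj (psi i)) (n i)) ->
  has_n_classes (twisted_conj prodmap) (foldr muln 1%N [seq n i | i : I]).
Proof.
move=> hn; have code i := cid (hn i).
have codeP i a b : sval (code i) a = sval (code i) b <-> twisted_conj (psi i) a b.
  by case: (code i) => c [c_surj cR]; exact: cR.
pose d x : {dffun forall i, 'I_(n i)} := [ffun i => sval (code i) (x i)].
have -> : foldr muln 1%N [seq n i | i : I] = #|{dffun forall i, 'I_(n i)}|.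
  by rewrite card_dep_ffun; congr foldr; apply: eq_map => i; rewrite card_ord.
apply: (@has_n_classes_of_code _ _ _ d) => [t | x y].
  have pre i : {a : A i | sval (code i) a = t i}.
    by apply: cid; case: (code i) => c [c_surj cR]; exact: c_surj.
  exists [ffun i => sval (pre i)]; apply/ffunP => i.
  by rewrite !ffunE; case: (pre i).
rewrite twisted_conj_prodmap; split=> [/ffunP dxy i | tw].
  by apply/codeP; have := dxy i; rewrite !ffunE.
by apply/ffunP => i; rewrite !ffunE; apply/codeP.
Qed.

End DirectProduct.

Definition emul_list (I : Type) (s : seq I) (f : I -> enat) : enat :=
  foldr (fun i acc => enat_mul (f i) acc) (Fin 1) s.

Lemma emul_list_Inf (I : eqType) (s : seq I) f i :
  i \in s -> f i = Inf -> emul_list s f = Inf.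
Proof.
elim: s => //= a s IH; rewrite in_cons => /orP [/eqP <- -> // | i_s fi].
by rewrite IH //; case: (f a).
Qed.

Lemma emul_list_Fin (I : Type) (s : seq I) (n : I -> nat) :
  emul_list s (fun i => Fin (n i)) = Fin (foldr muln 1 [seq n i | i <- s]).
Proof. by elim: s => //= a s ->. Qed.

Lemma reidemeister_prodmap (I : finType) (A : I -> groupType)
    (psi : forall i, A i -> A i) (k : I -> enat) :
  (forall i, is_hom (psi i)) -> (forall i, reidemeister_number_is (psi i) (k i)) ->
  reidemeister_number_is (prodmap psi) (emul_list (enum I) k).
Proof.
move=> hom_psi hk.
have [[i ki] | fin_k] := pselect (exists i, k i = Inf).
  rewrite (emul_list_Inf (mem_enum _ i) ki).
  by apply: (reidemeister_prodmap_Inf hom_psi (k := i)); rewrite -ki.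
have fin i : {m | k i = Fin m}.
  by apply: cid; case E: (k i) => [m|]; [exists m | case: fin_k; exists i].
have -> : k = fun i => Fin (sval (fin i)) by apply: funext => i; case: (fin i).
rewrite emul_list_Fin /=; apply: reidemeister_prodmap_Fin => i.
by have := hk i; case: (fin i) => m /= ->.
Qed.

Lemma set_pow_emul_list (S : enat_set) (I : Type) (s : seq I) (f : I -> enat) :
  (forall i, S (f i)) -> set_pow S (size s) (emul_list s f).
Proof.
move=> Sf; elim: s => //= a s IH.
by exists (f a), (emul_list s f).
Qed.

Lemma set_pow_emul_listP (S : enat_set) j k : set_pow S j k ->
  exists f : 'I_j -> enat, (forall t, S (f t)) /\ k = emul_list (enum 'I_j) f.
Proof.
elim: j k => [|j IH] k /=.
  by move=> ->; exists (fun _ => Fin 1); split=> [[] | ]; rewrite ?enum_ord0.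
case=> a [b [Sa [Sb ->]]]; have [f [Sf ->]] := IH _ Sb.
exists (fun t => if unlift ord0 t is Some t' then f t' else a); split.
  by move=> t; case: (unlift ord0 t).
rewrite enum_ordSl /= unlift_none /emul_list foldr_map; congr enat_mul.
by elim: (enum 'I_j) => //= t s ->; rewrite liftK.
Qed.

Lemma big_set_prod_emul_list (I : Type) (s : seq I) (F : I -> enat_set)
    (f : I -> enat) :
  (forall i, F i (f i)) -> big_set_prod s F (emul_list s f).
Proof. by move=> Ff; elim: s => //= a s IH; exists (f a), (emul_list s f). Qed.

Lemma big_set_prodP (I : eqType) (s : seq I) (F : I -> enat_set) k :
  uniq s -> big_set_prod s F k ->
  exists f, (forall i, i \in s -> F i (f i)) /\ k = emul_list s f.
Proof.
elim: s k => [|a s IH] k /=; first by move=> _ ->; exists (fun _ => Fin 1).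
case/andP=> a_s uniq_s [x [y [Fx [Fy ->]]]].
have [f [Ff ->]] := IH _ uniq_s Fy.
exists (fun i => if i == a then x else f i); split.
  by move=> i; rewrite inE; case: eqP => [-> | _ /Ff].
rewrite eqxx; congr enat_mul; rewrite /emul_list.
elim: s a_s {IH uniq_s Fy Ff} => //= b s IHs.
by rewrite inE negb_or => /andP [ab bs]; rewrite eq_sym (negbTE ab) IHs.
Qed.

Lemma big_set_prod_Inf (I : finType) (F : I -> enat_set) :
  (forall k, big_set_prod (enum I) F k -> k = Inf) <->
  exists i, forall k, F i k -> k = Inf.
Proof.
split=> [inf | [i inf_i] k /(big_set_prodP (enum_uniq _)) [f [Ff ->]]].
  apply: contrapT => /forallNP fin.
  have m i : {m | F i (Fin m)}.
    apply: cid; have /existsNP [[m|] not_inf] := fin i; last by case: not_inf.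
    by exists m; apply: contrapT => nF; apply: not_inf => /nF.
  have := inf _ (@big_set_prod_emul_list _ (enum I) F
    (fun i => Fin (sval (m i))) (fun i => svalP (m i))).
  by rewrite emul_list_Fin.
apply: (emul_list_Inf (mem_enum _ i)); exact/inf_i/Ff/mem_enum.
Qed.

Lemma set_pow_union_Inf (S : enat_set) r : 0 < r ->
  (forall k, (exists2 j, 1 <= j <= r & set_pow S j k) -> k = Inf) <->
  (forall k, S k -> k = Inf).
Proof.
move=> r_gt0; split=> inf k.
  move=> Sk; have : enat_mul k (Fin 1) = Inf.
    by apply: inf; exists 1 => //; exists k, (Fin 1).
  by case: k {Sk}.
by case=> -[|j] // _ [a [b [Sa [_ ->]]]]; rewrite (inf _ Sa).
Qed.

(* By the structure theorem
   below, these are all the automorphisms of H^K when H is non-trivial,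
   centreless and indecomposable. *)
Section Monomial.
Local Open Scope group_scope.
Variable H : groupType.

Definition powG (K : finType) : groupType := dprodG (fun _ : K => H).

Definition monomial (K : finType) (tau : K -> K) (phi : K -> H -> H)
    (x : powG K) : powG K :=
  [ffun l => phi l (x (tau l))].

Lemma monomialE (K : finType) tau phi (x : powG K) l :
  monomial tau phi x l = phi l (x (tau l)).
Proof. by rewrite ffunE. Qed.

Lemma monomial_hom (K : finType) tau (phi : K -> H -> H) :
  (forall l, is_hom (phi l)) -> is_hom (monomial tau phi).
Proof.
by move=> hom_phi x y; apply/ffunP => l; rewrite !(dprod_mulE, monomialE) hom_phi.
Qed.

Lemma monomial_iso (K : finType) (tau : K -> K) (phi : K -> H -> H) :
  injective tau -> (forall l, is_iso (phi l)) -> is_iso (monomial tau phi).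
Proof.
move=> tau_inj iso_phi; split.
  by apply: monomial_hom => l; case: (iso_phi l).
have [tau' tauK tau'K] := injF_bij tau_inj.
have inv_phi l : {g | cancel (phi l) g /\ cancel g (phi l)}.
  by apply: cid; have [_ [g g1 g2]] := iso_phi l; exists g.
exists (fun y : powG K => [ffun l => sval (inv_phi (tau' l)) (y (tau' l))] : powG K)
  => x; apply/ffunP => l; rewrite !ffunE ?tauK ?tau'K.
  by case: (inv_phi (tau' l)) => g [phiK gK].
by case: (inv_phi l) => g [phiK gK].
Qed.

Lemma monomial_prodmap (K : finType) (tau : K -> K) (phi : K -> H -> H) :
  (forall l, tau l = l) -> monomial tau phi = prodmap (A := fun _ : K => H) phi.
Proof. by move=> tau_id; apply: funext => x; apply/ffunP => l; rewrite !ffunE tau_id. Qed.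

Lemma reidemeister_monomial_relabel (K1 K2 : finType) (e : K1 -> K2)
    (tau1 : K1 -> K1) (phi1 : K1 -> H -> H) (tau2 : K2 -> K2)
    (phi2 : K2 -> H -> H) :
  bijective e -> (forall l, e (tau1 l) = tau2 (e l)) ->
  (forall l, phi1 l = phi2 (e l)) ->
  forall k, reidemeister_number_is (monomial tau2 phi2) k <->
            reidemeister_number_is (monomial tau1 phi1) k.
Proof.
move=> [e' eK e'K] e_tau e_phi.
pose theta (x : powG K2) : powG K1 := [ffun l => x (e l)].
apply: (reidemeister_conj (theta := theta)).
  split=> [x y | ]; first by apply/ffunP => l; rewrite !(ffunE, dprod_mulE).
  by exists (fun y : powG K1 => [ffun l => y (e' l)] : powG K2) => x;
    apply/ffunP => l; rewrite !ffunE ?eK ?e'K.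
by move=> x; apply/ffunP => l; rewrite !(ffunE, monomialE) e_tau e_phi.
Qed.

(* The
   map [contract] merges coordinate [k] into its [tau]-preimage; it is onto
   and identifies twisted classes, so the Reidemeister number is unchanged
   while the number of coordinates drops by one. *)
Section Contraction.
Variables (K : finType) (tau : K -> K) (phi : K -> H -> H) (k : K).
Hypotheses (tau_inj : injective tau) (hom_phi : forall l, is_hom (phi l)).
Hypothesis tau_k : tau k != k.

Definition Kc : finType := {l : K | l != k}.
Definition tau_k_c : Kc := exist _ (tau k) tau_k.

Definition tau_c (l : Kc) : Kc :=
  insubd tau_k_c (if tau (val l) == k then tau k else tau (val l)).

Definition phi_c (l : Kc) : H -> H :=
  if tau (val l) == k then phi (val l) \o phi k else phi (val l).

Definition contract (x : powG K) : powG Kc :=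
  [ffun l => if tau (val l) == k then x (val l) * phi (val l) (x k)
             else x (val l)].

Lemma tau_cE l : val (tau_c l) = if tau (val l) == k then tau k else tau (val l).
Proof. by rewrite insubdK //; case: ifP => // /negbT. Qed.

Lemma tau_c_inj : injective tau_c.
Proof.
move=> [a a_k] [b b_k] /(congr1 val); rewrite !tau_cE /=.
case: ifP => /eqP ta; case: ifP => /eqP tb.
- by move=> _; apply: val_inj; apply: tau_inj; rewrite /= ta tb.
- by move/tau_inj => kb; exfalso; move: b_k; rewrite -kb eqxx.
- by move/tau_inj => ak; exfalso; move: a_k; rewrite ak eqxx.
- by move/tau_inj => ab; apply: val_inj.
Qed.

Lemma phi_c_iso : (forall l, is_iso (phi l)) -> forall l, is_iso (phi_c l).
Proof. by move=> iso_phi l; rewrite /phi_c; case: ifP => _ //; exact: iso_comp. Qed.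

Lemma card_Kc : #|{: Kc}| = #|K|.-1.
Proof. by rewrite card_sig -(cardC1 k); apply: eq_card => x; rewrite !inE. Qed.

Definition uncontract (z : H) (y : powG Kc) : powG K :=
  [ffun l => if l == k then z else y (insubd tau_k_c l)].

Lemma uncontract_k z y : uncontract z y k = z.
Proof. by rewrite ffunE eqxx. Qed.

Lemma uncontract_val z y (l : Kc) : uncontract z y (val l) = y l.
Proof.
rewrite ffunE; case: l => v v_k /=; rewrite (negbTE v_k).
by rewrite (_ : insubd tau_k_c v = exist _ v v_k) //; apply: val_inj; rewrite insubdK.
Qed.

Lemma contract_surj y : exists x, contract x = y.
Proof.
exists (uncontract 1 y); apply/ffunP => l.
by rewrite ffunE uncontract_k (hom1 (hom_phi _)) mulg1 uncontract_val if_same.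
Qed.

Lemma contract_twisted x y : twisted_conj (monomial tau phi) x y ->
  twisted_conj (monomial tau_c phi_c) (contract x) (contract y).
Proof.
case=> g ->; exists [ffun l => g (val l)]; apply/ffunP => l.
rewrite !(ffunE, dprod_mulE, dprod_invE, monomialE) tau_cE /phi_c.
case: ifP => [/eqP tl | _] //=; rewrite tl.
by rewrite !(hom_phi (val l)) !(homV _ (hom_phi (val l))) !mulgA mulgVK.
Qed.

Lemma twisted_uncontract x y :
  twisted_conj (monomial tau_c phi_c) (contract x) (contract y) ->
  twisted_conj (monomial tau phi) x y.
Proof.
case=> g' e.
have [g [g_val g_k]] : exists g : powG K, (forall l : Kc, g (val l) = g' l) /\
    g k = y k * phi k (g' tau_k_c) * (x k)^-1.
  by exists (uncontract (y k * phi k (g' tau_k_c) * (x k)^-1) g');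
    split=> [l|]; [exact: uncontract_val | exact: uncontract_k].
exists g; apply/ffunP => l; rewrite !(dprod_mulE, dprod_invE, monomialE).
have [-> | l_k] := eqVneq l k.
  by rewrite (g_val tau_k_c) g_k mulgVK mulgK.
pose l' : Kc := exist _ l l_k; rewrite (g_val l').
move/ffunP: e => /(_ l'); rewrite !(ffunE, dprod_mulE, dprod_invE, monomialE) /phi_c /=.
case: ifP => [/eqP tl | /negbT tl].
- have -> : tau_c l' = tau_k_c by apply: val_inj; rewrite tau_cE /= tl eqxx.
  move=> e; rewrite tl g_k; apply: (mulIg (phi l (y k))); rewrite e /=.
  by rewrite !(hom_phi l) !(homV _ (hom_phi l)) !invgM !invgK !mulgA mulgVK.
- have -> : tau_c l' = exist _ (tau l) tl.
    by apply: val_inj; rewrite tau_cE /= (negbTE tl).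
  by rewrite -(g_val (exist _ (tau l) tl)).
Qed.

Lemma reidemeister_contract kk :
  reidemeister_number_is (monomial tau phi) kk <->
  reidemeister_number_is (monomial tau_c phi_c) kk.
Proof.
apply: (reidemeister_transfer (f := contract)); first exact: contract_surj.
by move=> x y; split; [exact: contract_twisted | exact: twisted_uncontract].
Qed.

End Contraction.
End Monomial.

Section MonomialSpectrum.
Local Open Scope group_scope.
Variable H : groupType.

Lemma prodmap_spectrum (K : finType) (phi : K -> H -> H) :
  (forall l, is_iso (phi l)) -> exists kk,
    reidemeister_number_is (prodmap (A := fun _ : K => H) phi) kk /\
    set_pow (SpecR H) #|K| kk.
Proof.
move=> iso_phi.
have rn l : {kk | reidemeister_number_is (phi l) kk}.
  exact/cid/reidemeister_exists.
exists (emul_list (enum K) (fun l => sval (rn l))); split.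
  apply: reidemeister_prodmap => l; first by case: (iso_phi l).
  exact: svalP.
rewrite cardE; apply: set_pow_emul_list => l.
by exists (phi l); split; [exact: iso_phi | exact: svalP].
Qed.

(* Contracting moved coordinates one at a time reduces any monomial
   automorphism to a componentwise one on at least one coordinate. *)
Lemma monomial_spectrum (K : finType) (tau : K -> K) (phi : K -> H -> H) :
  0 < #|K| -> injective tau -> (forall l, is_iso (phi l)) -> exists kk,
    reidemeister_number_is (monomial tau phi) kk /\
    exists2 j, 0 < j <= #|K| & set_pow (SpecR H) j kk.
Proof.
have [N] := ubnP #|K|; elim: N K tau phi => // N IH K tau phi.
rewrite ltnS => K_N K_gt0 tau_inj iso_phi.
have hom_phi l : is_hom (phi l) by case: (iso_phi l).
have [/forallP tau_id | /forallPn [k tau_k]] := boolP [forall l, tau l == l].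
  have [kk [rn_kk pow_kk]] := prodmap_spectrum iso_phi.
  exists kk; split; first by rewrite (monomial_prodmap _ (fun l => eqP (tau_id l))).
  by exists #|K|; rewrite ?K_gt0 ?leqnn.
have Kc_gt0 : 0 < #|{: Kc k}| by apply/card_gt0P; exists (tau_k_c tau_k).
have Kc_N : #|{: Kc k}| < N by rewrite card_Kc -ltnS prednK.
have [kk [rn_kk [j /andP [j_gt0 j_le] pow_kk]]] :=
  IH _ _ _ Kc_N Kc_gt0 (@tau_c_inj _ _ _ tau_inj tau_k) (phi_c_iso tau iso_phi).
exists kk; split; first exact/(reidemeister_contract hom_phi tau_k).
by exists j => //; rewrite j_gt0 (leq_trans j_le) // card_Kc leq_pred.
Qed.

(* Conversely, every element of Spec_R(H)^(j) is realised componentwise on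
   H^j ... *)
Lemma prodmap_realize j kk : set_pow (SpecR H) j kk ->
  exists phi : 'I_j -> H -> H, (forall l, is_iso (phi l)) /\
    reidemeister_number_is (prodmap (A := fun _ => H) phi) kk.
Proof.
move=> /set_pow_emul_listP [f [Sf ->]].
have aut t : {a : H -> H | is_aut a /\ reidemeister_number_is a (f t)}.
  exact: cid (Sf t).
exists (fun t => sval (aut t)); split=> [t | ]; first by case: (aut t) => a [].
by apply: reidemeister_prodmap => t; case: (aut t) => a [[]].
Qed.

(* ... and a monomial automorphism of H^(r+1) extends to H^(r+2) with the
   same Reidemeister number: the new coordinate is inserted into the orbit
   of coordinate 0 with the identity twist, and contracting it gives back
   the original map. *)
Section Extension.
Variables (r : nat) (tau : 'I_r.+1 -> 'I_r.+1) (phi : 'I_r.+1 -> H -> H).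
Hypotheses (tau_inj : injective tau) (iso_phi : forall l, is_iso (phi l)).

Local Notation new := (@ord_max r.+1).
Local Notation old := (lift new).

Definition ext_tau (l : 'I_r.+2) : 'I_r.+2 :=
  if unlift new l is Some l' then (if l' == ord0 then new else old (tau l'))
  else old (tau ord0).

Definition ext_phi (l : 'I_r.+2) : H -> H :=
  if unlift new l is Some l' then (if l' == ord0 then id else phi l')
  else phi ord0.

Lemma ext_tau_old l : ext_tau (old l) = if l == ord0 then new else old (tau l).
Proof. by rewrite /ext_tau liftK. Qed.

Lemma ext_tau_new : ext_tau new = old (tau ord0).
Proof. by rewrite /ext_tau unlift_none. Qed.

Lemma ext_phi_old l : ext_phi (old l) = if l == ord0 then id else phi l.
Proof. by rewrite /ext_phi liftK. Qed.

Lemma ext_phi_new : ext_phi new = phi ord0.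
Proof. by rewrite /ext_phi unlift_none. Qed.

Lemma old_neq_new l : old l != new.
Proof. by rewrite eq_sym neq_lift. Qed.

Lemma ext_tau_inj : injective ext_tau.
Proof.
have old_tau_new l : old (tau l) = new -> False.
  by move=> e; move: (old_neq_new (tau l)); rewrite e eqxx.
move=> a b; case: (unliftP new a) => [a'|] ->; case: (unliftP new b) => [b'|] ->;
  rewrite ?ext_tau_old ?ext_tau_new //.
- case: ifP => [/eqP -> | _]; case: ifP => [/eqP -> | _] //.
  + by move/esym/old_tau_new.
  + by move/old_tau_new.
  + by move/lift_inj/tau_inj ->.
- case: ifP => [_ /esym/old_tau_new // | /negbT a'0 /lift_inj/tau_inj a'_0].
  by rewrite a'_0 eqxx in a'0.
- case: ifP => [_ /old_tau_new // | /negbT b'0 /lift_inj/tau_inj b'_0].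
  by rewrite -b'_0 eqxx in b'0.
Qed.

Lemma ext_phi_iso l : is_iso (ext_phi l).
Proof.
case: (unliftP new l) => [l'|] ->; rewrite ?ext_phi_old ?ext_phi_new //.
by case: ifP => _ //; exact: iso_id.
Qed.

Lemma reidemeister_extend kk :
  reidemeister_number_is (monomial ext_tau ext_phi) kk <->
  reidemeister_number_is (monomial tau phi) kk.
Proof.
have hom_phi l : is_hom (ext_phi l) by case: (ext_phi_iso l).
have tau_new : ext_tau new != new by rewrite ext_tau_new old_neq_new.
rewrite (reidemeister_contract hom_phi tau_new).
pose e (l : 'I_r.+1) : Kc new := exist _ (old l) (old_neq_new l).
have e_bij : bijective e.
  apply: inj_card_bij; first by move=> a b /(congr1 val) /lift_inj.
  by rewrite card_Kc !card_ord.
apply: (reidemeister_monomial_relabel e_bij) => l.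
  apply: val_inj; rewrite tau_cE /= ext_tau_old.
  by have [-> | _] := eqVneq l ord0; rewrite ?eqxx ?ext_tau_new // (negbTE (old_neq_new _)).
rewrite /phi_c /= ext_tau_old.
have [-> | l0] := eqVneq l ord0; first by rewrite eqxx ext_phi_new ext_phi_old eqxx.
by rewrite (negbTE (old_neq_new _)) ext_phi_old (negbTE l0).
Qed.

End Extension.

Lemma monomial_realize r j kk : 0 < j <= r -> set_pow (SpecR H) j kk ->
  exists (tau : 'I_r -> 'I_r) (phi : 'I_r -> H -> H),
    [/\ injective tau, forall l, is_iso (phi l) &
        reidemeister_number_is (monomial tau phi) kk].
Proof.
elim: r => [|r IH] /andP [j_gt0 j_le] pow_kk; first by have := leq_trans j_gt0 j_le.
have [j_r | j_r] := eqVneq j r.+1.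
  rewrite j_r in pow_kk; have [phi [iso_phi rn_kk]] := prodmap_realize pow_kk.
  by exists id, phi; split; rewrite ?monomial_prodmap.
have j_le_r : j <= r by rewrite -ltnS ltn_neqAle j_r.
case: r IH j_le j_r j_le_r => [|r] IH _ _ j_le_r; first by have := leq_trans j_gt0 j_le_r.
have [tau [phi [tau_inj iso_phi rn_kk]]] := IH (introT andP (conj j_gt0 j_le_r)) pow_kk.
exists (ext_tau tau), (ext_phi phi); split.
- exact: ext_tau_inj.
- exact: ext_phi_iso.
- by apply/reidemeister_extend.
Qed.

End MonomialSpectrum.

Record group_closed (X : groupType) (P : pred X) : Prop := GroupClosed {
  group_closed1 : P one;
  group_closedM : forall a b, P a -> P b -> P (mul a b);
  group_closedV : forall a, P a -> P (inv a) }.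

Record subgrp (X : groupType) (P : pred X) (cP : group_closed P) : Type :=
  Subgrp { subval : X; subvalP : P subval }.
HB.instance Definition _ X P cP := [isSub for @subval X P cP].
HB.instance Definition _ X P cP := [Choice of @subgrp X P cP by <:].

Section SubgroupType.
Variables (X : groupType) (P : pred X) (cP : group_closed P).
Definition subgrp_one : subgrp cP := Subgrp cP (group_closed1 cP).
Definition subgrp_mul (a b : subgrp cP) : subgrp cP :=
  Subgrp cP (group_closedM cP (subvalP a) (subvalP b)).
Definition subgrp_inv (a : subgrp cP) : subgrp cP :=
  Subgrp cP (group_closedV cP (subvalP a)).
Fact subgrp_mulA : associative subgrp_mul.
Proof. by move=> a b c; apply: val_inj; rewrite /= mulgA. Qed.
Fact subgrp_mul1 : left_id subgrp_one subgrp_mul.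
Proof. by move=> a; apply: val_inj; rewrite /= mul1g. Qed.
Fact subgrp_mulg1 : right_id subgrp_one subgrp_mul.
Proof. by move=> a; apply: val_inj; rewrite /= mulg1. Qed.
Fact subgrp_mulV : left_inverse subgrp_one subgrp_inv subgrp_mul.
Proof. by move=> a; apply: val_inj; rewrite /= mulVg. Qed.
Fact subgrp_mulgV : right_inverse subgrp_one subgrp_inv subgrp_mul.
Proof. by move=> a; apply: val_inj; rewrite /= mulgV. Qed.
End SubgroupType.

HB.instance Definition _ X P cP :=
  isGroup.Build (@subgrp X P cP) (@subgrp_mulA X P cP) (@subgrp_mul1 X P cP)
    (@subgrp_mulg1 X P cP) (@subgrp_mulV X P cP) (@subgrp_mulgV X P cP).

Section InternalDirectProduct.
Local Open Scope group_scope.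

Lemma group_closed_asbool (X : groupType) (Q : X -> Prop) :
  Q 1 -> (forall a b, Q a -> Q b -> Q (a * b^-1)) ->
  group_closed (fun x => `[< Q x >]).
Proof.
move=> Q1 Qdiv; have QV a : Q a -> Q a^-1 by move/(Qdiv _ _ Q1); rewrite mul1g.
split=> [|a b /asboolP Qa /asboolP Qb|a /asboolP Qa]; apply/asboolP => //.
  by rewrite -[b]invgK; apply: Qdiv => //; apply: QV.
exact: QV.
Qed.

Variables (X : groupType) (PA PB : X -> Prop).
Hypotheses (PA1 : PA 1) (PA_div : forall a b, PA a -> PA b -> PA (a * b^-1)).
Hypotheses (PB1 : PB 1) (PB_div : forall a b, PB a -> PB b -> PB (a * b^-1)).
Hypothesis AB_commute : forall a b, PA a -> PB b -> a * b = b * a.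
Hypothesis AB_trivial : forall c, PA c -> PB c -> c = 1.
Hypothesis AB_generate : forall x, exists a b, PA a /\ PB b /\ x = a * b.

Let PA_mul a b : PA a -> PA b -> PA (a * b).
Proof.
move=> Pa Pb; rewrite -[b]invgK; apply: PA_div => //.
by have := PA_div PA1 Pb; rewrite mul1g.
Qed.

Let PB_mul a b : PB a -> PB b -> PB (a * b).
Proof.
move=> Pa Pb; rewrite -[b]invgK; apply: PB_div => //.
by have := PB_div PB1 Pb; rewrite mul1g.
Qed.

Lemma internal_decomp_unique a b a' b' : PA a -> PB b -> PA a' -> PB b' ->
  a * b = a' * b' -> a = a' /\ b = b'.
Proof.
move=> Pa Pb Pa' Pb' e.
have e1 : a'^-1 * a = b' * b^-1 by rewrite -(mulgK b a) e -mulgA mulKg.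
have PA_a'a : PA (a'^-1 * a).
  by have := PA_div (PA_div PA1 Pa') (PA_div PA1 Pa); rewrite !mul1g invgK.
have one_b : b' * b^-1 = 1 by apply: AB_trivial; [rewrite -e1 | apply: PB_div].
split; first by apply: (mulgI a'^-1); rewrite mulVg e1 one_b.
by apply/esym/divg1_eq.
Qed.

Definition subA := subgrp (group_closed_asbool PA1 PA_div).
Definition subB := subgrp (group_closed_asbool PB1 PB_div).

Lemma internal_dprod_isomorphic : isomorphic X (gprod subA subB).
Proof.
have decomp x : {ab : X * X | PA ab.1 /\ PB ab.2 /\ x = ab.1 * ab.2}.
  by apply: cid; have [a [b [Pa [Pb e]]]] := AB_generate x; exists (a, b).
have decompE x a b : PA a -> PB b -> x = a * b -> sval (decomp x) = (a, b).
  move=> Pa Pb e; case: (decomp x) => -[a' b'] /= [Pa' [Pb' e']].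
  by have [-> ->] := internal_decomp_unique Pa' Pb' Pa Pb (etrans (esym e') e).
pose f x : gprod subA subB :=
  (Subgrp _ (introT (asboolP _) (proj1 (svalP (decomp x)))),
   Subgrp _ (introT (asboolP _) (proj1 (proj2 (svalP (decomp x)))))).
exists f; split.
  move=> x y; have [a [b [Pa [Pb ex]]]] := AB_generate x.
  have [a' [b' [Pa' [Pb' ey]]]] := AB_generate y.
  have exy : x * y = (a * a') * (b * b').
    by rewrite ex ey -!mulgA; congr (a * _); rewrite !mulgA (AB_commute Pa' Pb).
  apply: injective_projections; apply: val_inj => /=;
  by rewrite (decompE _ _ _ (PA_mul Pa Pa') (PB_mul Pb Pb') exy)
    (decompE _ _ _ Pa Pb ex) (decompE _ _ _ Pa' Pb' ey).
exists (fun p => subval p.1 * subval p.2) => [x | [u v]].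
  by rewrite /f /=; case: (svalP (decomp x)) => _ [_ <-].
have /asboolP Pu := subvalP u; have /asboolP Pv := subvalP v.
by apply: injective_projections; apply: val_inj; rewrite /= (decompE _ _ _ Pu Pv erefl).
Qed.

Lemma indecomposable_internal_dprod : directly_indecomposable X ->
  (forall a, PA a -> a = 1) \/ (forall b, PB b -> b = 1).
Proof.
move=> indec; have [triv | triv] := indec _ _ internal_dprod_isomorphic.
  by left=> a Pa; have := triv (Subgrp _ (introT (asboolP _) Pa)); case.
by right=> b Pb; have := triv (Subgrp _ (introT (asboolP _) Pb)); case.
Qed.

End InternalDirectProduct.

Section ProductAutomorphisms.
Local Open Scope group_scope.
Variables (I : finType) (F : I -> groupType).
Hypothesis F_nontrivial : forall i, ~ trivial_group (F i).
Hypothesis F_centreless : forall i, centreless (F i).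
Hypothesis F_indecomposable : forall i, directly_indecomposable (F i).
Variables (psi psi' : dprodG F -> dprodG F).
Hypotheses (hom_psi : is_hom psi) (psiK : cancel psi psi') (psi'K : cancel psi' psi).

Lemma exists_nontrivial i : exists b : F i, b <> 1.
Proof.
apply: contrapT => no_b; apply: (F_nontrivial (i := i)) => b.
by apply: contrapT => b1; apply: no_b; exists b.
Qed.

Section Factor.
Variable k : I.

Definition psi_k (a : F k) : dprodG F := psi (incl a).

Lemma psi_k_hom : is_hom psi_k.
Proof. exact: hom_comp (@incl_hom _ _ k) hom_psi. Qed.

Lemma psi_k_inj : injective psi_k.
Proof. by move=> a b /(can_inj psiK) /incl_inj. Qed.

Lemma psi_k1 : psi_k 1 = 1.
Proof. exact: hom1 psi_k_hom. Qed.

Definition kills_factor l := forall a, psi_k a l = 1.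
Definition kills_complement l := forall x : dprodG F, x k = 1 -> psi x l = 1.

Lemma psi_split (x : dprodG F) :
  psi x = psi_k (x k) * psi ((incl (x k))^-1 * x) /\
  ((incl (x k))^-1 * x) k = 1.
Proof.
split; first by rewrite /psi_k -hom_psi mulVKg.
by rewrite dprod_mulE dprod_invE incl_at mulVg.
Qed.

Lemma coordinate_generated l (c : F l) :
  exists a (x : dprodG F), x k = 1 /\ c = psi_k a l * psi x l.
Proof.
pose x := psi' (incl c); have [e1 e2] := psi_split x.
exists (x k), ((incl (x k))^-1 * x); split=> //.
by rewrite -dprod_mulE -e1 psi'K incl_at.
Qed.

(* The images in F_l of F_k and of its complement form an internal direct
   decomposition of F_l (they commute and generate, so their intersection
   is central, hence trivial); so one of them is trivial. *)
Lemma kills_dichotomy l : kills_factor l \/ kills_complement l.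
Proof.
pose PA (c : F l) := exists a, psi_k a l = c.
pose PB (c : F l) := exists x : dprodG F, x k = 1 /\ psi x l = c.
have PA1 : PA 1 by exists 1; rewrite psi_k1 dprod_oneE.
have PB1 : PB 1 by exists 1; rewrite dprod_oneE (hom1 hom_psi) dprod_oneE.
have PA_div a b : PA a -> PA b -> PA (a * b^-1).
  case=> a0 <- [b0 <-]; exists (a0 * b0^-1).
  by rewrite psi_k_hom (homV _ psi_k_hom) dprod_mulE dprod_invE.
have PB_div a b : PB a -> PB b -> PB (a * b^-1).
  case=> x [xk <-] [y [yk <-]]; exists (x * y^-1); split.
    by rewrite dprod_mulE dprod_invE xk yk invg1 mulg1.
  by rewrite hom_psi (homV _ hom_psi) dprod_mulE dprod_invE.
have AB_commute a b : PA a -> PB b -> a * b = b * a.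
  case=> a0 <- [x [xk <-]]; rewrite -!dprod_mulE /psi_k -!hom_psi.
  congr (psi _ l); apply/ffunP => m; rewrite !dprod_mulE.
  have [<- | km] := eqVneq k m; first by rewrite xk mulg1 mul1g.
  by rewrite incl_off // mulg1 mul1g.
have AB_generate c : exists a b, PA a /\ PB b /\ c = a * b.
  have [a [x [xk ->]]] := coordinate_generated c.
  by exists (psi_k a l), (psi x l); split; [exists a | split; [exists x|]].
have AB_trivial c : PA c -> PB c -> c = 1.
  move=> Ac Bc; apply: F_centreless => z.
  have [a [b [Aa [Bb ->]]]] := AB_generate z.
  by rewrite mulgA -(AB_commute _ _ Aa Bc) -!mulgA (AB_commute _ _ Ac Bb).
have [trivA | trivB] := indecomposable_internal_dprod PA1 PA_div PB1 PB_div
  AB_commute AB_trivial AB_generate (@F_indecomposable l).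
  by left=> a; apply: trivA; exists a.
by right=> x xk; apply: trivB; exists x.
Qed.

Lemma kills_not_both l : kills_factor l -> kills_complement l -> False.
Proof.
move=> kf kc; apply: (F_nontrivial (i := l)) => c.
by have [a [x [xk ->]]] := coordinate_generated c; rewrite kf kc // mulg1.
Qed.

(* Some coordinate kills the complement: otherwise every coordinate kills
   F_k, and the injective psi_k would force F_k to be trivial. *)
Lemma exists_kills_complement : exists l, kills_complement l.
Proof.
apply: contrapT => no_l; apply: (F_nontrivial (i := k)) => a.
apply: psi_k_inj; rewrite psi_k1; apply/ffunP => l; rewrite dprod_oneE.
by have [-> // | kc] := kills_dichotomy l; case: no_l; exists l.
Qed.

Lemma psi_k_onto (y : dprodG F) :
  (forall l, kills_factor l -> y l = 1) -> exists a, psi_k a = y.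
Proof.
move=> y_supp; have [e1 e2] := psi_split (psi' y).
have trivial_rest : psi ((incl (psi' y k))^-1 * psi' y) = 1.
  apply/ffunP => l; rewrite dprod_oneE.
  have [kf | kc] := kills_dichotomy l; last exact: kc.
  by move/ffunP: e1 => /(_ l); rewrite dprod_mulE kf mul1g psi'K => <-; apply: y_supp.
by exists (psi' y k); move: e1; rewrite trivial_rest mulg1 psi'K.
Qed.

Lemma psi_k_onto_coordinate l (b : F l) :
  kills_complement l -> exists a, psi_k a = incl b.
Proof.
move=> kc; apply: psi_k_onto => l' kf.
have [e | ll'] := eqVneq l l'; last exact: incl_off.
by move: kf; rewrite -e => kf; case: (kills_not_both kf kc).
Qed.

Lemma psi_k_split_at l1 (a : F k) : exists u v,
  [/\ forall l, l != l1 -> psi_k u l = 1, psi_k v l1 = 1 & a = u * v].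
Proof.
pose y1 : dprodG F := [ffun l => if l == l1 then psi_k a l else 1].
pose y2 : dprodG F := [ffun l => if l == l1 then 1 else psi_k a l].
have [u Pu] : exists u, psi_k u = y1.
  by apply: psi_k_onto => l kf; rewrite ffunE; case: eqP => // ->.
have [v Pv] : exists v, psi_k v = y2.
  by apply: psi_k_onto => l kf; rewrite ffunE kf if_same.
exists u, v; split=> [l ll1 | | ]; first by rewrite Pu ffunE (negbTE ll1).
  by rewrite Pv ffunE eqxx.
apply: psi_k_inj; rewrite psi_k_hom Pu Pv; apply/ffunP => l.
by rewrite dprod_mulE !ffunE; case: eqP; rewrite ?mulg1 ?mul1g.
Qed.

(* Only one coordinate kills the complement of F_k: otherwise F_k would
   split as (part landing in l1) x (part vanishing at l1). *)
Lemma kills_complement_unique l1 l2 :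
  kills_complement l1 -> kills_complement l2 -> l1 = l2.
Proof.
move=> kc1 kc2; apply: contrapT => l12.
pose PU (a : F k) := forall l, l != l1 -> psi_k a l = 1.
pose PV (a : F k) := psi_k a l1 = 1.
have psi_k_div a b l : psi_k (a * b^-1) l = psi_k a l * (psi_k b l)^-1.
  by rewrite psi_k_hom (homV _ psi_k_hom) dprod_mulE dprod_invE.
have PU1 : PU 1 by move=> l _; rewrite psi_k1 dprod_oneE.
have PV1 : PV 1 by rewrite /PV psi_k1 dprod_oneE.
have PU_div a b : PU a -> PU b -> PU (a * b^-1).
  by move=> Ua Ub l ll1; rewrite psi_k_div Ua // Ub // invg1 mulg1.
have PV_div a b : PV a -> PV b -> PV (a * b^-1).
  by move=> Va Vb; rewrite /PV psi_k_div Va Vb invg1 mulg1.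
have UV_commute a b : PU a -> PV b -> a * b = b * a.
  move=> Ua Vb; apply: psi_k_inj; rewrite !psi_k_hom; apply/ffunP => l.
  rewrite !dprod_mulE; have [-> | ll1] := eqVneq l l1; first by rewrite Vb mulg1 mul1g.
  by rewrite Ua // mulg1 mul1g.
have UV_trivial c : PU c -> PV c -> c = 1.
  move=> Uc Vc; apply: psi_k_inj; rewrite psi_k1; apply/ffunP => l.
  by rewrite dprod_oneE; have [-> | ll1] := eqVneq l l1; last exact: Uc.
have UV_generate a : exists u v, PU u /\ PV v /\ a = u * v.
  by have [u [v [Uu Vv ->]]] := psi_k_split_at l1 a; exists u, v.
have [trivU | trivV] := indecomposable_internal_dprod PU1 PU_div PV1 PV_div
  UV_commute UV_trivial UV_generate (@F_indecomposable k).
- have [b b1] := exists_nontrivial l1; have [a Pa] := psi_k_onto_coordinate b kc1.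
  have a1 : a = 1 by apply: trivU => l ll1; rewrite Pa incl_off // eq_sym.
  by apply: b1; rewrite -(incl_at b) -Pa a1 psi_k1 dprod_oneE.
- have [b b1] := exists_nontrivial l2; have [a Pa] := psi_k_onto_coordinate b kc2.
  have a1 : a = 1 by apply: trivV; rewrite /PV Pa incl_off //; apply/eqP => /esym.
  by apply: b1; rewrite -(incl_at b) -Pa a1 psi_k1 dprod_oneE.
Qed.

End Factor.

Definition target k : I := sval (cid (exists_kills_complement k)).

Lemma target_kills_complement k : kills_complement k (target k).
Proof. exact: svalP. Qed.

Lemma kills_factor_off_target k l : l != target k -> kills_factor k l.
Proof.
move=> lt; have [// | kc] := kills_dichotomy k l.
by case/eqP: lt; exact: kills_complement_unique kc (@target_kills_complement k).
Qed.

Lemma target_inj : injective target.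
Proof.
move=> k1 k2 t12; apply: contrapT => k12; apply: (F_nontrivial (i := k2)) => b.
apply: (@psi_k_inj k2); rewrite psi_k1; apply/ffunP => l; rewrite dprod_oneE.
have [-> | lt] := eqVneq l (target k2); last exact: kills_factor_off_target.
by rewrite -t12; apply: target_kills_complement; rewrite incl_off // eq_sym; apply/eqP.
Qed.

Lemma psi_at_target k x : psi x (target k) = psi_k (x k) (target k).
Proof.
have [e1 e2] := psi_split k x.
by rewrite e1 dprod_mulE (target_kills_complement e2) mulg1.
Qed.

Lemma psi_k_target_iso k : is_iso (fun a : F k => psi_k a (target k)).
Proof.
split=> [a b | ]; first by rewrite psi_k_hom dprod_mulE.
have incl_target (a : F k) : incl (psi_k a (target k)) = psi_k a.
  apply/ffunP => l; have [<- | tl] := eqVneq (target k) l; first by rewrite incl_at.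
  by rewrite incl_off // kills_factor_off_target // eq_sym.
exists (fun c => psi' (incl c) k) => [a | c] /=.
  by rewrite incl_target /psi_k psiK incl_at.
by rewrite -psi_at_target psi'K incl_at.
Qed.

(* Inverting [target] gives the permutation tau of the structure theorem. *)
Lemma psi_monomial : exists tau : I -> I, injective tau /\ forall l,
  is_iso (fun a : F (tau l) => psi (incl a) l) /\
  forall x, psi x l = psi (incl (x (tau l))) l.
Proof.
have [tau tK tK'] := injF_bij target_inj.
exists tau; split=> [| l]; first exact: can_inj tK'.
have := psi_k_target_iso (tau l); have := @psi_at_target (tau l).
by rewrite /psi_k tK' => at_l; split=> // x; rewrite at_l.
Qed.

End ProductAutomorphisms.

Lemma aut_dprod_monomial (I : finType) (F : I -> groupType)
    (psi : dprodG F -> dprodG F) :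
  (forall i, ~ trivial_group (F i)) -> (forall i, centreless (F i)) ->
  (forall i, directly_indecomposable (F i)) -> is_aut psi ->
  exists tau : I -> I, injective tau /\ forall l,
    is_iso (fun a : F (tau l) => psi (incl a) l) /\
    forall x, psi x l = psi (incl (x (tau l))) l.
Proof.
by move=> F_nt F_cl F_ind [hom_psi [psi' psiK psi'K]]; exact: psi_monomial.
Qed.

(* G = prod_i G_i^(r_i) is regrouped as the product of
   the blocks G_i^(r_i); by the structure theorem and the pairwise
   non-isomorphism of the G_i, every automorphism of G is conjugate to a
   product of monomial automorphisms of the blocks, and conversely. *)
Section PowerProduct.
Local Open Scope group_scope.
Variables (n : nat) (G : 'I_n -> groupType) (r : 'I_n -> nat).

Definition block (i : 'I_n) : groupType := powG (G i) 'I_(r i).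

Definition slot i (j : 'I_(r i)) : {i : 'I_n & 'I_(r i)} := Tagged (fun i => 'I_(r i)) j.

Definition regroup (x : powprodG G r) : dprodG block :=
  [ffun i => [ffun j => x (slot j)] : block i].

Definition ungroup (y : dprodG block) : powprodG G r :=
  [ffun k => y (tag k) (tagged k)].

Lemma regroupE x i j : regroup x i j = x (slot j).
Proof. by rewrite !ffunE. Qed.

Lemma regroupK : cancel regroup ungroup.
Proof. by move=> x; apply/ffunP => -[i j]; rewrite ffunE regroupE. Qed.

Lemma ungroupK : cancel ungroup regroup.
Proof. by move=> y; apply/ffunP => i; apply/ffunP => j; rewrite regroupE ffunE. Qed.

Lemma regroup_iso : is_iso regroup.
Proof.
split; last by exists ungroup; [exact: regroupK | exact: ungroupK].
by move=> x y; apply/ffunP => i; apply/ffunP => j; rewrite !(dprod_mulE, regroupE).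
Qed.

Definition block_spectrum (i : 'I_n) : enat_set :=
  fun k => exists2 j, 1 <= j <= r i & set_pow (SpecR (G i)) j k.

Hypothesis G_nontrivial : forall i, ~ trivial_group (G i).
Hypothesis G_nonisomorphic : forall i j, i != j -> ~ isomorphic (G i) (G j).
Hypothesis G_centreless : forall i, centreless (G i).
Hypothesis G_indecomposable : forall i, directly_indecomposable (G i).
Hypothesis r_pos : forall i, 0 < r i.

Lemma aut_block_monomial (psi : powprodG G r -> powprodG G r) : is_aut psi ->
  exists (tau : forall i, 'I_(r i) -> 'I_(r i)) (phi : forall i, 'I_(r i) -> G i -> G i),
  [/\ forall i, injective (tau i), forall i j, is_iso (phi i j) &
      forall x, regroup (psi x) = prodmap (fun i => monomial (tau i) (phi i)) (regroup x)].
Proof.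
move=> aut_psi.
have [sigma [sigma_inj sigma_iso]] := aut_dprod_monomial (fun k => @G_nontrivial (tag k))
  (fun k => @G_centreless (tag k)) (fun k => @G_indecomposable (tag k)) aut_psi.
have tag_sigma k : tag (sigma k) = tag k.
  apply: contrapT => ne; have [iso_k _] := sigma_iso k.
  by apply: (G_nonisomorphic (i := tag (sigma k)) (j := tag k)); [apply/eqP | exact: ex_intro _ _ iso_k].
have within i (j : 'I_(r i)) : {t : 'I_(r i) | sigma (slot j) = slot t}.
  move: (tag_sigma (slot j)); case: (sigma _) => i' t /= e.
  by move: t; rewrite e => t; exists t.
pose tau i j := sval (within i j).
have tauE i j : sigma (slot j) = slot (tau i j) by rewrite /tau; case: (within i j).
exists tau, (fun i j a => psi (incl (A := fun k => G (tag k)) (k := slot (tau i j)) a) (slot j)).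
split=> [i j1 j2 e | i j | x].
- have : sigma (slot j1) = sigma (slot j2) by rewrite !tauE e.
  by move/sigma_inj/(congr1 (fun k => nat_of_ord (tagged k))) => /= /val_inj.
- by have [+ _] := sigma_iso (slot j); rewrite tauE.
apply/ffunP => i; apply/ffunP => j; rewrite regroupE /prodmap ffunE monomialE regroupE.
by have [_ ->] := sigma_iso (slot j); rewrite tauE.
Qed.

Lemma spectrum_forward k : SpecR (powprodG G r) k ->
  exists f, (forall i, block_spectrum i (f i)) /\ k = emul_list (enum 'I_n) f.
Proof.
case=> psi [aut_psi rn_k].
have [tau [phi [tau_inj phi_iso conj_psi]]] := aut_block_monomial aut_psi.
have block_rn i : {kk | reidemeister_number_is (monomial (tau i) (phi i)) kk /\
    block_spectrum i kk}.
  apply: cid; have r_gt0 : 0 < #|'I_(r i)| by rewrite card_ord r_pos.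
  have [kk [rn_kk [j j_r pow_kk]]] := monomial_spectrum r_gt0 (tau_inj i) (phi_iso i).
  by exists kk; split=> //; exists j; rewrite card_ord in j_r.
exists (fun i => sval (block_rn i)); split=> [i | ]; first by case: (svalP (block_rn i)).
apply: (reidemeister_unique rn_k); apply/(reidemeister_conj regroup_iso conj_psi).
apply: reidemeister_prodmap => i; last by case: (svalP (block_rn i)).
by apply: monomial_hom => j; case: (phi_iso i j).
Qed.

Lemma spectrum_backward f : (forall i, block_spectrum i (f i)) ->
  SpecR (powprodG G r) (emul_list (enum 'I_n) f).
Proof.
move=> block_f.
have realise i : {tp : ('I_(r i) -> 'I_(r i)) * ('I_(r i) -> G i -> G i) |
    [/\ injective tp.1, forall l, is_iso (tp.2 l) &
        reidemeister_number_is (monomial tp.1 tp.2) (f i)]}.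
  apply: cid; have [j j_r pow_j] := block_f i.
  by have [tau [phi ?]] := monomial_realize j_r pow_j; exists (tau, phi).
pose Psi i := monomial (sval (realise i)).1 (sval (realise i)).2.
have Psi_iso i : is_iso (Psi i).
  by case: (svalP (realise i)) => tau_inj phi_iso _; exact: monomial_iso.
exists (ungroup \o prodmap Psi \o regroup); split.
  apply: iso_comp; first exact: regroup_iso.
  by apply: iso_comp; [exact: prodmap_iso | exact: iso_inv regroup_iso regroupK ungroupK].
apply/(reidemeister_conj regroup_iso (chi := prodmap Psi)) => [x | ].
  by rewrite /= ungroupK.
apply: reidemeister_prodmap => i; first by case: (Psi_iso i).
by case: (svalP (realise i)).
Qed.

Lemma powprod_spectrum k :
  SpecR (powprodG G r) k <-> big_set_prod (enum 'I_n) block_spectrum k.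
Proof.
split=> [/spectrum_forward [f [block_f ->]] | /(big_set_prodP (enum_uniq _))].
  exact: big_set_prod_emul_list.
case=> f [block_f ->]; apply: spectrum_backward => i.
by apply: block_f; rewrite mem_enum.
Qed.

Lemma powprod_R_infinity :
  R_infinity (powprodG G r) <-> exists i, R_infinity (G i).
Proof.
split=> [/R_infinityP inf | [i /R_infinityP inf_i]].
  have [i inf_i] : exists i, forall k, block_spectrum i k -> k = Inf.
    by apply/big_set_prod_Inf => k /powprod_spectrum /inf.
  by exists i; apply/R_infinityP/(set_pow_union_Inf _ (r_pos i)).
apply/R_infinityP => k /powprod_spectrum; move: k; apply/big_set_prod_Inf.
by exists i; apply/(set_pow_union_Inf _ (r_pos i)).
Qed.

End PowerProduct.

Theorem mainTheorem16 (n : nat) (G : 'I_n -> groupType) (r : 'I_n -> nat) :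
  (forall i, ~ trivial_group (G i)) ->
  (forall i j, i != j -> ~ isomorphic (G i) (G j)) ->
  (forall i, centreless (G i)) ->
  (forall i, directly_indecomposable (G i)) ->
  (forall i, 0 < r i) ->
  (forall k : enat,
     SpecR (powprodG G r) k <->
     big_set_prod (enum 'I_n)
       (fun i k' => exists2 j, 1 <= j <= r i & set_pow (SpecR (G i)) j k') k)
  /\
  (R_infinity (powprodG G r) <-> exists i, R_infinity (G i)).
Proof.
move=> G_nt G_noniso G_cl G_ind r_pos; split.
  exact: powprod_spectrum G_nt G_noniso G_cl G_ind r_pos.
exact: powprod_R_infinity G_nt G_noniso G_cl G_ind r_pos.
Qed.
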